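(* For every $t \in \mathbb{N}_0$ and every integer $b \ge 2$, the cyclotomic polynomial $\Phi_b(x)$ does not divide \begin{align*} S_t(x) = {}& x^{4t+13} + x^{4t+11} + x^{4t+10} + x^{4t+9} - x^{4t+8} - x^{2t+13} - x^{2t+10} - x^{2t+9} + 3x^{2t+7} + x^{2t+5} \\ & - x^{2t+4} + x^{2t+3} - x^{2t+2} + x^{2t+1} - 2x^{t+6} + x^6 - x^5 - x - 1. \end{align*}
   Context: $\Phi_b(x) = \prod_\zeta (x-\zeta)$, where $\zeta$ ranges over the primitive $b$-th roots of unity, is the $b$-th cyclotomic polynomial. *)

From mathcomp Require Import all_boot all_order all_algebra all_field.
Set Implicit Arguments. Unset Strict Implicit. Unset Printing Implicit Defensive.
Import GRing.Theory Num.Theory.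
Local Open Scope ring_scope.

Definition S_poly (t : nat) : {poly int} :=
  'X^(4*t+13) + 'X^(4*t+11) + 'X^(4*t+10) + 'X^(4*t+9) - 'X^(4*t+8)
  - 'X^(2*t+13) - 'X^(2*t+10) - 'X^(2*t+9) + 3%:P * 'X^(2*t+7) + 'X^(2*t+5)
  - 'X^(2*t+4) + 'X^(2*t+3) - 'X^(2*t+2) + 'X^(2*t+1) - 2%:P * 'X^(t+6)
  + 'X^6 - 'X^5 - 'X - 1.

(* If Phi_b divides S_t, every primitive b-th root of unity z is a root of S_t, and so is
   z^-1.  Write S_t(x) = S(x, x^t) for a fixed S in Z[x, y], and let S* = x^13 y^4 S(1/x, 1/y)
   be its reciprocal: then (z, z^t) is a common zero of S and S*, so z is a root of their
   resultant in y, which is x^18 (x - 1)^2 Q(x) for an explicit Q of degree 66; as z <> 0, 1,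
   Q(z) = 0.  Now another primitive b-th root w is a root of Q as well, with w = z^2 (b odd),
   w = -z^2 (b = 2 mod 4) or w = -z (4 | b).  Modulo 7, Q is coprime to Q(x^2), Q(-x^2) and
   Q(-x) respectively, so a common root would make 1 a multiple of 7 among the algebraic
   integers. *)

From mathcomp Require Import all_boot all_order all_algebra all_field.
From Stdlib Require Import ZArith.
From mathcomp Require Import ssrZ ring zify.
Set Implicit Arguments. Unset Strict Implicit. Unset Printing Implicit Defensive.
Import GRing.Theory Num.Theory ssrZ.Instances.
Delimit Scope nat_scope with N.
Local Open Scope ring_scope.

(* Dense polynomials as little-endian coefficient lists, over any type with computable
   ring operations, so that identities between concrete polynomials reduce by [vm_compute]. *)
Section DensePoly.

Variables (A : Type) (zero : A) (add mul : A -> A -> A) (opp : A -> A).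

Fixpoint dadd (p q : seq A) : seq A :=
  match p, q with
  | [::], _ => q
  | _, [::] => p
  | a :: p', b :: q' => add a b :: dadd p' q'
  end.

Definition dsub (p q : seq A) : seq A := dadd p (map opp q).

Fixpoint dmul (p q : seq A) : seq A :=
  if p is a :: p' then dadd (map (mul a) q) (zero :: dmul p' q) else [::].

Definition dcomp (p q : seq A) : seq A :=
  foldr (fun a r => dadd [:: a] (dmul q r)) [::] p.

Variables (R : comNzRingType) (ev : A -> R).
Hypotheses (ev0 : ev zero = 0) (evD : {morph ev : a b / add a b >-> a + b})
  (evN : {morph ev : a / opp a >-> - a}) (evM : {morph ev : a b / mul a b >-> a * b}).

Fixpoint deval (p : seq A) (x : R) : R :=
  if p is a :: p' then ev a + x * deval p' x else 0.

Lemma deval_add p q x : deval (dadd p q) x = deval p x + deval q x.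
Proof.
elim: p q => [|a p IHp] [|b q] /=; rewrite ?add0r ?addr0 // evD IHp; ring.
Qed.

Lemma deval_sub p q x : deval (dsub p q) x = deval p x - deval q x.
Proof.
rewrite deval_add; congr (_ + _).
by elim: q => [|b q IHq] /=; rewrite ?oppr0 // evN IHq; ring.
Qed.

Lemma deval_mul p q x : deval (dmul p q) x = deval p x * deval q x.
Proof.
have deval_scale a r : deval (map (mul a) r) x = ev a * deval r x.
  by elim: r => [|b r IHr] /=; rewrite ?mulr0 // evM IHr; ring.
elim: p => [|a p IHp] /=; first by rewrite mul0r.
by rewrite deval_add deval_scale /= ev0 IHp; ring.
Qed.

Lemma deval_comp p q x : deval (dcomp p q) x = deval p (deval q x).
Proof.
elim: p => [|a p IHp] //.
have -> : dcomp (a :: p) q = dadd [:: a] (dmul q (dcomp p q)) by [].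
by rewrite deval_add deval_mul IHp /= mulr0 addr0.
Qed.

Section ZeroTest.

Variables (is0 : pred A) (ev_is0 : {in is0, forall a, ev a = 0}).

Lemma deval_eq0 p x : all is0 p -> deval p x = 0.
Proof. by elim: p => [|a p IHp] //= /andP[/ev_is0-> /IHp->]; rewrite mulr0 addr0. Qed.

Lemma deval_eq p q x : all is0 (dsub p q) -> deval p x = deval q x.
Proof. by move/(deval_eq0 x)/eqP; rewrite deval_sub subr_eq0 => /eqP. Qed.

End ZeroTest.

End DensePoly.

Notation zpoly := (seq Z).
Notation zadd := (dadd Z.add).
Notation zsub := (dsub Z.add Z.opp).
Notation zmul := (dmul 0%Z Z.add Z.mul).
Notation zcomp := (dcomp 0%Z Z.add Z.mul).

Definition zcoef {R : pzRingType} (c : Z) : R := (int_of_Z c)%:~R.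
Notation zeval := (deval zcoef).

Section IntegerCoefficients.

Variable R : comNzRingType.

Lemma zcoef0 : zcoef 0 = 0 :> R. Proof. by []. Qed.

Lemma zcoefD : {morph (@zcoef R) : a b / Z.add a b >-> a + b}.
Proof. by move=> a b; rewrite /zcoef -intrD -rmorphD. Qed.

Lemma zcoefN : {morph (@zcoef R) : a / Z.opp a >-> - a}.
Proof. by move=> a; rewrite /zcoef -intrN -rmorphN. Qed.

Lemma zcoefM : {morph (@zcoef R) : a b / Z.mul a b >-> a * b}.
Proof. by move=> a b; rewrite /zcoef -intrM -rmorphM. Qed.

Lemma zcoef_pos p : zcoef (Zpos p) = (Pos.to_nat p)%:R :> R.
Proof. by []. Qed.

Lemma zcoef_neg p : zcoef (Zneg p) = - (Pos.to_nat p)%:R :> R.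
Proof. by rewrite -zcoef_pos -zcoefN. Qed.

Lemma zeval_add p q (x : R) : zeval (zadd p q) x = zeval p x + zeval q x.
Proof. exact/deval_add/zcoefD. Qed.

Lemma zeval_opp p (x : R) : zeval (map Z.opp p) x = - zeval p x.
Proof. by elim: p => [|a p IHp] /=; rewrite ?oppr0 // zcoefN IHp; ring. Qed.

Lemma zeval_sub p q (x : R) : zeval (zsub p q) x = zeval p x - zeval q x.
Proof. exact/deval_sub/zcoefN/zcoefD. Qed.

Lemma zeval_mul p q (x : R) : zeval (zmul p q) x = zeval p x * zeval q x.
Proof. exact/deval_mul/zcoefM/zcoefD. Qed.

Lemma zeval_comp p q (x : R) : zeval (zcomp p q) x = zeval p (zeval q x).
Proof. exact/deval_comp/zcoefM/zcoefD. Qed.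

Lemma zcoef_eqb0 : {in Z.eqb ^~ 0%Z, forall c, zcoef c = 0 :> R}.
Proof. by move=> c /Z.eqb_spec->. Qed.

End IntegerCoefficients.

Ltac zcoef_literals := rewrite ?zcoef0 ?zcoef_pos ?zcoef_neg; cbv [Pos.to_nat Pos.iter_op Nat.add].

Lemma zeval_monomial (R : comNzRingType) n (x : R) : zeval (rcons (nseq n 0%Z) 1%Z) x = x ^+ n.
Proof.
by elim: n => [|n IHn] /=; [rewrite mulr0 addr0 | rewrite IHn zcoef0 add0r exprS].
Qed.

Notation bpoly := (seq zpoly).
Notation bsub := (dsub zadd (map Z.opp)).
Notation badd := (dadd zadd).
Notation bmul := (dmul [::] zadd zmul).

Definition beval {R : comNzRingType} (P : bpoly) (x y : R) : R := deval (zeval ^~ x) P y.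

Section Bivariate.

Variables (R : comNzRingType) (x y : R).

Lemma beval_add P Q : beval (badd P Q) x y = beval P x y + beval Q x y.
Proof. by apply: deval_add => p q; apply: zeval_add. Qed.

Lemma beval_mul P Q : beval (bmul P Q) x y = beval P x y * beval Q x y.
Proof. by apply: deval_mul => // p q; [apply: zeval_add | apply: zeval_mul]. Qed.

Lemma beval_eq P Q : all (all (Z.eqb ^~ 0%Z)) (bsub P Q) -> beval P x y = beval Q x y.
Proof.
apply: deval_eq => [p q|p|p p0]; [exact: zeval_add | exact: zeval_opp |].
exact: (deval_eq0 (@zcoef_eqb0 R)).
Qed.

End Bivariate.

Lemma Aint_zeval p (z : algC) : z \in Aint -> zeval p z \in Aint.
Proof.
move=> zA; elim: p => [|c p IHp] /=; first exact: Aint0.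
by rewrite rpredD ?rpredM // Aint_int.
Qed.

Lemma Aint_one_add_mul_neq0 (m : int) (a : algC) : 1 < m -> a \in Aint -> 1 + m%:~R * a != 0.
Proof.
move=> m_gt1 aA; apply/eqP => eq0.
have m0 : m%:~R != 0 :> algC by rewrite intr_eq0; apply: contraTneq m_gt1 => ->.
have aQ : a \in Crat.
  have -> : a = - (m%:~R)^-1.
    by apply: (mulfI m0); rewrite mulrN mulfV //; apply/eqP; rewrite -addr_eq0 addrC eq0.
  by rewrite rpredN rpredV rpred_int.
have /intrP[k ak] := Cint_rat_Aint aQ aA.
move/eqP: eq0; rewrite ak -intrM -[1]/(1%:~R) -intrD intr_eq0 => /eqP.
by case: (lerP 0 k); nia.
Qed.

Definition zdvd_coefs (n : Z) (p : zpoly) : bool := all (fun c => Z.eqb (c mod n) 0) p.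

Lemma zeval_zdvd_coefs (R : comNzRingType) n p (x : R) : n <> 0%Z -> zdvd_coefs n p ->
  zeval p x = zcoef n * zeval (map (Z.div ^~ n) p) x.
Proof.
move=> n0; elim: p => [|c p IHp] /=; first by rewrite mulr0.
move=> /andP[/Z.eqb_spec/(Z.div_exact c n n0) {1}-> /IHp->].
by rewrite zcoefM; ring.
Qed.

Definition bezout_mod (n : Z) (p q : zpoly) (uv : zpoly * zpoly) : bool :=
  zdvd_coefs n (zsub (zadd (zmul uv.1 p) (zmul uv.2 q)) [:: 1%Z]).

(* A common root of [p] and [q] would make [-1 = u p + v q - 1] an [n]-multiple of an
   algebraic integer. *)
Lemma bezout_mod_no_common_root n p q uv (z : algC) : 1 < int_of_Z n ->
  bezout_mod n p q uv -> z \in Aint -> zeval p z = 0 -> zeval q z = 0 -> False.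
Proof.
move=> n_gt1 bez zA pz0 qz0.
have n0 : n <> 0%Z by move=> n0; rewrite n0 in n_gt1.
have := zeval_zdvd_coefs z n0 bez.
rewrite zeval_sub zeval_add !zeval_mul pz0 qz0 !mulr0 addr0 /= mulr0 addr0 sub0r => /eqP.
rewrite eq_sym -addr_eq0 addrC; apply/negP/Aint_one_add_mul_neq0 => //.
exact: Aint_zeval.
Qed.

Section PrimitiveRoots.

Variables (F : fieldType) (n : nat) (z : F).

Lemma prim_root_inv : n.-primitive_root z -> n.-primitive_root z^-1.
Proof.
move=> prim_z; have n_gt0 := prim_order_gt0 prim_z.
have z0 : z != 0 by rewrite (prim_root_eq0 prim_z) -lt0n.
have -> : z^-1 = z ^+ n.-1.
  by apply: (mulfI z0); rewrite mulfV // -exprS prednK // prim_expr_order.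
by rewrite prim_root_exp_coprime // coprimePn.
Qed.

Lemma prim_root_sqr : odd n -> n.-primitive_root z -> n.-primitive_root (z ^+ 2).
Proof. by move=> n_odd prim_z; rewrite prim_root_exp_coprime // coprime2n. Qed.

Lemma prim_root_half_expr : (n.*2).-primitive_root z -> z ^+ n = -1.
Proof.
move=> prim_z; have n_gt0 : (0 < n)%N by rewrite -double_gt0 (prim_order_gt0 prim_z).
have : (z ^+ n) ^+ 2 == 1 by rewrite -exprM muln2 prim_expr_order.
rewrite sqrf_eq1 -(prim_order_dvd prim_z) => /orP[|/eqP //].
by move/(dvdn_leq n_gt0); rewrite -addnn => ?; lia.
Qed.

Lemma prim_root_opp_sqr : odd n -> (n.*2).-primitive_root z -> (n.*2).-primitive_root (- z ^+ 2).
Proof.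
move=> n_odd prim_z; rewrite -mulN1r -(prim_root_half_expr prim_z) -exprD.
rewrite prim_root_exp_coprime // -mul2n coprimeMr coprimen2 oddD n_odd /=.
by rewrite coprime_sym /coprime gcdnDl -/(coprime n 2) coprimen2.
Qed.

Lemma prim_root_opp : ~~ odd n -> (n.*2).-primitive_root z -> (n.*2).-primitive_root (- z).
Proof.
move=> n_even prim_z; rewrite -mulN1r -(prim_root_half_expr prim_z) -exprSr.
by rewrite prim_root_exp_coprime // -mul2n coprimeMr coprimen2 /= n_even coprimeSn.
Qed.

End PrimitiveRoots.

Lemma Cyclotomic_dvdp_root n p (z : algC) : 'Phi_n %| p -> n.-primitive_root z ->
  root (map_poly intr p) z.
Proof.
move=> /(Pdiv.IdomainMonic.dvdpP (Cyclotomic_monic n))[q ->] prim_z.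
by rewrite rmorphM rootM /= (Cintr_Cyclotomic prim_z) (root_cyclotomic prim_z) prim_z orbT.
Qed.

(* Rows are the coefficients of [y^0, ..., y^4]: [S_t(x) = S(x, x^t)]. *)
Definition S_bivariate : seq zpoly :=
  [::
    [:: -1; -1; 0; 0; 0; -1; 1];
    [:: 0; 0; 0; 0; 0; 0; -2];
    [:: 0; 1; -1; 1; -1; 1; 0; 3; 0; -1; -1; 0; 0; -1];
    [::];
    [:: 0; 0; 0; 0; 0; 0; 0; 0; -1; 1; 1; 1; 0; 1]]%Z.

Definition S_reciprocal : seq zpoly :=
  [::
    [:: 1; 0; 1; 1; 1; -1];
    [::];
    [:: -1; 0; 0; -1; -1; 0; 3; 0; 1; -1; 1; -1; 1];
    [:: 0; 0; 0; 0; 0; 0; 0; -2];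
    [:: 0; 0; 0; 0; 0; 0; 0; 1; -1; 0; 0; 0; -1; -1]]%Z.

Definition res_factor : zpoly :=
  [::
    1; -4; 6; -14; 25; -58; 81; -68; 294; -152; 736; 72; 1622; -688; 1620;
    -2178; 515; -8916; -4390; -13788; -4613; -19286; 1167; -4648; 23104; 3790;
    38002; 18156; 38485; -12678; 11311; -30780; -12782; -60812; -12782;
    -30780; 11311; -12678; 38485; 18156; 38002; 3790; 23104; -4648; 1167;
    -19286; -4613; -13788; -4390; -8916; 515; -2178; 1620; -688; 1622; 72;
    736; -152; 294; -68; 81; -58; 25; -14; 6; -4; 1]%Z.
Definition res_cofactor_S : seq zpoly :=
  [::
    [::
      0; 0; 0; 0; 0; 0; 0; 0; 0; 0; 0; 0; 0; 0; 0; 0; 0; 0; -1; 6; -14; 22;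
      -31; 59; -111; 88; -111; 136; -344; 125; 182; 158; -126; 130; 1956;
      -1003; 609; -2399; 3985; -6755; 2213; -6729; 10095; -10317; 11101;
      -7476; 17611; -15017; 13944; -14951; 14553; -20688; 13452; -15204;
      14735; -14374; 14418; -9971; 11166; -9212; 8730; -6863; 5449; -5020;
      4066; -3297; 2272; -1942; 1490; -1131; 704; -549; 397; -253; 157; -98;
      71; -34; 18; -8; 4; -1];
    [::
      0; 0; 0; 0; 0; 0; 0; 0; 0; 0; 0; 0; 0; 0; 0; 0; 0; 0; 0; 0; 0; 0; 0; 0;
      2; -12; 28; -42; 50; -96; 218; -212; 238; -206; 810; -868; 542; -826;
      1618; -3262; 1608; -1864; 4254; -5484; 6002; -2510; 7008; -9504; 7890;
      -7246; 6392; -12770; 10236; -7886; 8884; -10072; 11318; -7222; 7390;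
      -8110; 7440; -5760; 4774; -4762; 4100; -3074; 2472; -2252; 1628; -1262;
      940; -766; 494; -350; 256; -170; 102; -66; 44; -20; 10; -4; 2];
    [::
      0; 0; 0; 0; 0; 0; 0; 0; 0; 0; 0; 0; 0; 0; 0; 0; 0; 0; 0; 0; 0; 0; 0; 0;
      0; 1; -7; 20; -37; 59; -105; 205; -285; 371; -541; 869; -1156; 1139;
      -1444; 2281; -2689; 2584; -2132; 3845; -4719; 3319; -2521; 3821; -6111;
      3144; -1302; 2869; -5306; 2700; 912; 2110; -2958; 2054; 1647; 393;
      -2391; -190; 354; -755; -1213; -133; 730; 88; 55; 126; 416; 40; 23; -63;
      50; -36; -10; -25; 6; -6; 1; -2; 1];
    [::
      0; 0; 0; 0; 0; 0; 0; 0; 0; 0; 0; 0; 0; 0; 0; 0; 0; 0; 0; 0; 0; 0; 0; 0;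
      0; 0; 0; 0; 0; 0; 0; -2; 12; -26; 32; -28; 46; -132; 76; -14; -64; -58;
      136; 586; -302; 532; -212; 948; -1762; 240; -1760; 1064; -2356; 1684;
      -778; 3110; -778; 2372; -1014; 1448; -1732; 98; -1782; 278; -770; 310;
      -404; 522; 116; 228; -64; 138; 88; 34; -18; 0; 28; -4; -2; -14; 4; -4;
      0; -2]]%Z.
Definition res_cofactor_recip : seq zpoly :=
  [::
    [::
      0; 0; 0; 0; 0; 0; 0; 0; 0; 0; 0; 0; 0; 0; 0; 0; 0; 0; 0; -1; 7; -21; 44;
      -80; 146; -267; 393; -591; 864; -1330; 1787; -2269; 2985; -3906; 5213;
      -6137; 6978; -8183; 10455; -12237; 12238; -12229; 15286; -18221; 16038;
      -14063; 16036; -20542; 17435; -11062; 14122; -16871; 15159; -7573; 7253;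
      -12808; 8245; -4618; 2451; -5731; 5049; -264; 1377; -1305; 1901; 104;
      -282; -605; 8; 5; -316; -72; -50; 107; -60; 41; -15; 37; -14; 9; -4; 3;
      -1];
    [::
      0; 0; 0; 0; 0; 0; 0; 0; 0; 0; 0; 0; 0; 0; 0; 0; 0; 0; 0; 0; 0; 0; 0; 0;
      0; 2; -12; 28; -44; 56; -84; 170; -166; 210; -94; 208; -172; -8; 364;
      -490; 604; -890; 1754; -2444; 1650; -2964; 3602; -4324; 4106; -3168;
      6488; -4824; 4426; -4680; 4492; -5886; 2128; -3774; 3536; -2334; 2068;
      -978; 2266; -538; 480; -530; 472; -118; -222; -156; -26; 94; -166; 6;
      -62; 66; -50; 22; -20; 24; -8; 6; -2; 2];
    [::
      0; 0; 0; 0; 0; 0; 0; 0; 0; 0; 0; 0; 0; 0; 0; 0; 0; 0; 0; 0; 0; 0; 0; 0;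
      0; 0; 1; -7; 19; -32; 51; -96; 189; -239; 293; -531; 809; -1066; 860;
      -1621; 2484; -2640; 2671; -2382; 5831; -4867; 4271; -4800; 5975; -9723;
      3663; -6080; 7222; -7905; 7469; -2158; 8175; -5804; 5293; -3614; 3015;
      -5707; 2059; -2712; 1732; -2198; 1734; -649; 1156; -579; 693; -263; 283;
      -229; 119; -95; 41; -48; 18; -12; 5; -3; 1];
    [::
      0; 0; 0; 0; 0; 0; 0; 0; 0; 0; 0; 0; 0; 0; 0; 0; 0; 0; 0; 0; 0; 0; 0; 0;
      0; 0; 0; 0; 0; 0; 0; 0; -2; 12; -24; 24; -22; 46; -138; 66; 30; 66; -12;
      300; 724; -132; 140; -776; 306; -2286; -126; -1836; 2086; -1232; 3286;
      -536; 3822; -1786; 2242; -3106; 1290; -3072; 1138; -2374; 1470; -1158;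
      1376; -878; 1054; -440; 636; -386; 374; -186; 184; -126; 84; -54; 32;
      -30; 10; -8; 2; -2]]%Z.

(* [res_factor] is the resultant of [S_bivariate] and [S_reciprocal] with respect to [y],
   divided by [x^18 (x - 1)^2]. *)
Lemma resultant_identity :
  all (all (Z.eqb ^~ 0%Z))
    (bsub (badd (bmul res_cofactor_S S_bivariate) (bmul res_cofactor_recip S_reciprocal))
       [:: zmul (rcons (nseq 18 0%Z) 1%Z) (zmul [:: -1; 1]%Z (zmul [:: -1; 1]%Z res_factor))]).
Proof. by vm_compute. Qed.

Section Resultant.

Variable F : fieldType.

Lemma S_poly_eval t (x : F) : (map_poly intr (S_poly t)).[x] = beval S_bivariate x (x ^+ t).
Proof.
have expMt a b : x ^+ (a * t + b) = x ^+ b * (x ^+ t) ^+ a by rewrite exprD mulnC exprM mulrC.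
rewrite /S_poly !(rmorphB, rmorphD, rmorphM, rmorphXn, map_polyC, map_polyX, rmorph1) !hornerE /=.
rewrite !map_polyX !hornerX !expMt exprD /beval /=; zcoef_literals; ring.
Qed.

Lemma S_reciprocal_eval (x y : F) : x != 0 -> y != 0 ->
  beval S_reciprocal x y = x ^+ 13 * y ^+ 4 * beval S_bivariate x^-1 y^-1.
Proof. by move=> x0 y0; rewrite /beval /=; zcoef_literals; field; rewrite x0 y0. Qed.

Lemma S_common_root_res_factor (x y : F) : x != 0 -> x != 1 ->
  beval S_bivariate x y = 0 -> beval S_reciprocal x y = 0 -> zeval res_factor x = 0.
Proof.
move=> x0 x1 Sxy0 Rxy0.
have x_sub1 : zeval [:: -1; 1]%Z x = x - 1 by rewrite /=; zcoef_literals; ring.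
have beval_const r : beval [:: r] x y = zeval r x by rewrite /beval /= mulr0 addr0.
have := beval_eq x y resultant_identity.
rewrite beval_add !beval_mul Sxy0 Rxy0 !mulr0 addr0 beval_const.
rewrite !zeval_mul zeval_monomial x_sub1 => /esym/eqP.
by rewrite mulf_eq0 expf_eq0 (negbTE x0) andbF !mulf_eq0 subr_eq0 (negbTE x1) => /eqP.
Qed.

End Resultant.

Lemma res_factor_prim_root t b (z : algC) : (2 <= b)%N -> 'Phi_b %| S_poly t ->
  b.-primitive_root z -> zeval res_factor z = 0.
Proof.
move=> b_ge2 dvdS prim_z.
have S_root (w : algC) : b.-primitive_root w -> beval S_bivariate w (w ^+ t) = 0.
  by move=> prim_w; rewrite -(S_poly_eval t w); apply/eqP/(Cyclotomic_dvdp_root dvdS).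
have z0 : z != 0 by rewrite (prim_root_eq0 prim_z) -lt0n ltnW.
have z1 : z != 1.
  by apply: contraTneq b_ge2 => z1; rewrite -ltnNge ltnS dvdn_leq // (prim_order_dvd prim_z) z1.
apply: (S_common_root_res_factor z0 z1 (S_root z prim_z)).
by rewrite S_reciprocal_eval ?expf_neq0 // -[z ^- t]exprVn S_root ?mulr0 // prim_root_inv.
Qed.

Definition bezout_sqr : zpoly * zpoly :=
  ([::
    -3; 1; 1; 0; 1; 0; -1; -1; -3; 2; -3; 0; 3; -2; 0; 0; -3; -3; 2; 2; 0; 0;
    1; -3; 1; -1; -1; -2; -1; -2; -2; 2; 3; -3; -3; 1; -2; -2; -3; 3; -2; -1;
    1; 0; 2; -2; -2; 2; 3; -3; 3; 0; 1; -2; 0; 1; 3; 1; -1; 2; -3; 1; -1; -2;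
    -1; 0; 0; 1; -1; 1; -1; -1; -2; 0; 2; -3; -1; 2; 3; 1; 2; 1; -3; -3; 3; 1;
    -3; -1; -1; 0; 3; 2; 0; -3; 3; 1; 3; -1; 1; 1; 0; 1; -1; 3; -1; -1; -3; 0;
    0; 3; 0; 2; 3; -1; -1; -3; 2; -2; 0; -2; -2; 3; 3; 1; -3; 3; 1; 3; 1; -1;
    -2; -3],
   [::
    -3; 1; 2; 2; 3; 3; -2; 1; 2; 1; 1; -1; 2; -3; 2; 0; 3; -3; -3; -1; 2; 0;
    2; 1; 0; 2; -3; -2; -2; -3; 3; 2; 3; -3; 1; -2; -3; 0; -2; 3; 2; 3; -3;
    -3; 2; -1; -2; -1; 0; -3; 3; 0; 3; 2; -2; 2; 2; -2; -3; -2; -2; 2; 2; 2;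
    -3; 3])%Z.
Definition bezout_opp_sqr : zpoly * zpoly :=
  ([::
    1; 3; -1; 0; 3; 3; -2; -3; -1; 0; 3; -2; 3; 1; -3; 1; 0; 0; 1; 2; 1; -3;
    3; -3; 2; 2; 0; 0; -2; 0; 2; -2; 2; 0; 0; -2; 2; -1; 2; -1; 3; 1; -1; -2;
    -1; -2; 0; 0; 2; -2; 2; 2; -2; -1; 1; 2; 1; 2; 3; -3; 0; 2; -2; -1; -3; 0;
    1; 3; 3; 3; 1; -3; 2; 1; 0; 2; -1; -1; -1; -2; -1; 1; -2; 0; 3; -1; 0; 2;
    2; 0; -3; -3; -1; -1; -1; -3; -2; 3; -2; -1; -2; -1; 3; -1; 2; -2; -2; -2;
    1; 1; -1; -3; 0; -2; -3; -1; -2; -1; -3; -3; -1; -1; 2; -2; -2; 2; 3; 2;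
    0; -1; -1; 2],
   [::
    0; 1; 0; 2; -1; -1; -1; 2; -3; 2; 2; -1; 3; 1; 3; 0; -1; 1; -3; 2; 1; 2;
    3; 1; 0; -2; -3; 1; -2; -2; 0; 2; 1; 3; 2; -2; 3; -1; 0; 3; 1; -3; -3; 2;
    0; 2; 3; 1; 2; -1; 2; -3; -2; 0; 1; 2; -3; 2; 3; 2; -3; 1; 1; 0; 2; -2])%Z.
Definition bezout_opp : zpoly * zpoly :=
  ([::
    -3; 3; 2; -2; -1; 3; 0; 1; -3; -3; 3; 3; -1; 3; 0; 3; -3; -1; 1; -3; 1; 2;
    2; -2; 1; -3; 3; 2; 3; 2; 0; -3; -3; 1; 2; -3; 1; -1; -2; -1; -3; -2; -1;
    3; -2; 3; 3; -2; -1; -2; 0; 2; 0; 2; 1; -3; -2; -1; 3; 1; 0; 1; 3; 0; 3;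
    -1],
   [::
    -3; -3; 2; 2; -1; -3; 0; -1; -3; 3; 3; -3; -1; -3; 0; -3; -3; 1; 1; 3; 1;
    -2; 2; 2; 1; 3; 3; -2; 3; -2; 0; 3; -3; -1; 2; 3; 1; 1; -2; 1; -3; 2; -1;
    -3; -2; -3; 3; 2; -1; 2; 0; -2; 0; -2; 1; 3; -2; 1; 3; -1; 0; -1; 3; 0; 3;
    1])%Z.

Section ResFactorNoRootPairs.

Variables (x : algC) (x_Aint : x \in Aint) (res_x : zeval res_factor x = 0).

Lemma res_factor_comp_root s uv : bezout_mod 7 res_factor (zcomp res_factor s) uv ->
  zeval res_factor (zeval s x) = 0 -> False.
Proof.
by move=> bez; rewrite -zeval_comp; apply: (bezout_mod_no_common_root _ bez x_Aint res_x).
Qed.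

Lemma res_factor_sqr_root : zeval res_factor (x ^+ 2) = 0 -> False.
Proof.
have -> : x ^+ 2 = zeval [:: 0; 0; 1]%Z x by rewrite /=; zcoef_literals; ring.
by apply: (res_factor_comp_root (uv := bezout_sqr)); vm_compute.
Qed.

Lemma res_factor_opp_sqr_root : zeval res_factor (- x ^+ 2) = 0 -> False.
Proof.
have -> : - x ^+ 2 = zeval [:: 0; 0; -1]%Z x by rewrite /=; zcoef_literals; ring.
by apply: (res_factor_comp_root (uv := bezout_opp_sqr)); vm_compute.
Qed.

Lemma res_factor_opp_root : zeval res_factor (- x) = 0 -> False.
Proof.
have -> : - x = zeval [:: 0; -1]%Z x by rewrite /=; zcoef_literals; ring.
by apply: (res_factor_comp_root (uv := bezout_opp)); vm_compute.
Qed.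

End ResFactorNoRootPairs.

Theorem mainTheorem7 (t b : nat) : (2 <= b)%N -> ~~ ('Phi_b %| S_poly t).
Proof.
move=> b_ge2; apply/negP => dvdS.
have [z prim_z] := C_prim_root_exists (ltnW b_ge2).
have res_root := res_factor_prim_root b_ge2 dvdS.
have [z_Aint res_z] := (Aint_prim_root prim_z, res_root z prim_z).
have [b_odd | b_even] := boolP (odd b).
  by apply: (res_factor_sqr_root z_Aint res_z); apply/res_root/prim_root_sqr.
have def_b : b = b./2.*2 by rewrite -[LHS]odd_double_half (negbTE b_even).
rewrite def_b in prim_z res_root; have [half_odd | half_even] := boolP (odd b./2).
  by apply: (res_factor_opp_sqr_root z_Aint res_z); apply/res_root/prim_root_opp_sqr.
by apply: (res_factor_opp_root z_Aint res_z); apply/res_root/prim_root_opp.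
Qed.
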